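(* Let $G$ be a graph such that the free category $\mathcal{F}_1(G)$ is a totally ordered set (regarded as a category). Then $\mathcal{F}_1(G)$ is isomorphic to one of the following: - a finite ordinal $\mathsf{0},\mathsf{1},\dots,\mathsf{n},\dots$; - one of the totally ordered sets $\mathbb{N}$, $\mathbb{N}^{\mathrm{op}}$ and $\mathbb{Z}$ with their usual orders.
   Context: A graph is a directed multigraph, consisting of objects, arrows, and domain and codomain maps. $\mathcal{F}_1(G)$ is the free category on $G$. Its objects are the vertices of $G$, its morphisms are the finite composable paths of arrows, and identities are the empty paths. A poset is regarded as a category with a unique morphism $x\to y$ exactly when $x\le y$. The finite ordinal $\mathsf{n}$ is the totally ordered set $0<1<\dots<n-1$; in particular $\mathsf{0}$ is empty. *)

From Stdlib Require Import Arith ZArith.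

Record graph : Type := Graph {
  vert : Type;
  arr : Type;
  dom : arr -> vert;
  cod : arr -> vert
}.

(* Morphisms of the free category F_1(G) from x to y: finite composable paths of arrows.
   The identity is the empty path. *)
Inductive path (G : graph) : vert G -> vert G -> Type :=
| pnil : forall x : vert G, path G x x
| pcons : forall (e : arr G) (y : vert G), path G (cod G e) y -> path G (dom G e) y.

Fixpoint pcomp (G : graph) (x y z : vert G) (p : path G x y) : path G y z -> path G x z :=
  match p in path _ x0 y0 return path G y0 z -> path G x0 z with
  | pnil _ _ => fun q => q
  | pcons _ e y' p' => fun q => pcons G e z (pcomp G _ _ _ p' q)
  end.

(* F_1(G) is a poset regarded as a category: it is thin (at most one morphism
   between any two objects) and skeletal (morphisms both ways force equality). *)
Definition free_cat_is_poset (G : graph) : Prop :=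
  (forall (x y : vert G) (p q : path G x y), p = q) /\
  (forall x y : vert G, path G x y -> path G y x -> x = y).

Definition free_cat_is_total_order (G : graph) : Prop :=
  free_cat_is_poset G /\
  (forall x y : vert G, inhabited (path G x y) \/ inhabited (path G y x)).

(* Isomorphism of the thin category F_1(G) with a poset (T, le) regarded as a
   category: a bijection on objects, with hom-sets corresponding (both thin, so a
   bijection of hom-sets amounts to: one is inhabited iff the other is). *)
Definition free_cat_iso_poset (G : graph) (T : Type) (le : T -> T -> Prop) : Prop :=
  exists (f : vert G -> T) (g : T -> vert G),
    (forall x, g (f x) = x) /\ (forall t, f (g t) = t) /\
    (forall x y : vert G, inhabited (path G x y) <-> le (f x) (f y)).

Definition ordinal (n : nat) : Type := {k : nat | k < n}.
Definition ordinal_le (n : nat) (a b : ordinal n) : Prop := proj1_sig a <= proj1_sig b.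

From Stdlib Require Import Arith ZArith Lia Zwf Classical ClassicalEpsilon.

(* Fix a base vertex x0.  Since F_1(G) is thin, the path between two vertices,
   when it exists, is unique, so the signed height of v (the length of the path
   x0 -> v, or minus the length of the path v -> x0) is well defined and grows by
   the length of any path.  By totality the height is an order embedding of the
   objects into Z, and since each arrow raises it by exactly one its image is an
   interval of Z.  Every interval of Z is order-isomorphic to a finite ordinal,
   to N, to N^op or to Z. *)

Fixpoint plen {G : graph} {x y : vert G} (p : path G x y) : nat :=
  match p with
  | pnil _ _ => 0
  | pcons _ _ _ p' => S (plen p')
  end.

Lemma plen_pcomp (G : graph) (x y z : vert G) (p : path G x y) (q : path G y z) :
  plen (pcomp G x y z p q) = plen p + plen q.
Proof. induction p; simpl; auto. Qed.

Lemma plen0_eq (G : graph) (x y : vert G) (p : path G x y) : plen p = 0 -> x = y.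
Proof. destruct p; simpl; [reflexivity | discriminate]. Qed.

Definition iso_onto {T : Type} (leT : T -> T -> Prop) (S : Z -> Prop) (psi : T -> Z) : Prop :=
  (forall a b, psi a = psi b -> a = b) /\
  (forall a b, leT a b <-> (psi a <= psi b)%Z) /\
  (forall k, S k <-> exists t, psi t = k).

Lemma iso_onto_same_image {A B : Type} (leA : A -> A -> Prop) (leB : B -> B -> Prop)
    (S : Z -> Prop) (f : A -> Z) (g : B -> Z) :
  iso_onto leA S f -> iso_onto leB S g ->
  exists (F : A -> B) (F' : B -> A),
    (forall x, F' (F x) = x) /\ (forall y, F (F' y) = y) /\
    (forall x y, leA x y <-> leB (F x) (F y)).
Proof.
  intros [finj [fle fim]] [ginj [gle gim]].
  assert (to_B : forall x, exists y, g y = f x) by (intro x; apply gim, fim; eauto).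
  assert (to_A : forall y, exists x, f x = g y) by (intro y; apply fim, gim; eauto).
  destruct (choice _ to_B) as [F HF], (choice _ to_A) as [F' HF'].
  exists F, F'; split; [|split].
  - intro x; apply finj; rewrite HF', HF; reflexivity.
  - intro y; apply ginj; rewrite HF, HF'; reflexivity.
  - intros x y; rewrite fle, gle, !HF; reflexivity.
Qed.

Lemma iso_onto_Z (S : Z -> Prop) : (forall k, S k) -> iso_onto Z.le S (fun k => k).
Proof.
  intros HS; split; [|split]; auto; [reflexivity|].
  intro k; split; [exists k; reflexivity | auto].
Qed.

Lemma iso_onto_nat (S : Z -> Prop) (lo : Z) :
  (forall k, S k <-> lo <= k)%Z -> iso_onto le S (fun n => lo + Z.of_nat n)%Z.
Proof.
  intros HS; split; [|split]; [intros a b; lia | intros a b; lia |].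
  intro k; rewrite HS; split.
  - intro; exists (Z.to_nat (k - lo)); lia.
  - intros [n <-]; lia.
Qed.

Lemma iso_onto_nat_op (S : Z -> Prop) (hi : Z) :
  (forall k, S k <-> k <= hi)%Z -> iso_onto (fun a b => b <= a) S (fun n => hi - Z.of_nat n)%Z.
Proof.
  intros HS; split; [|split]; [intros a b; lia | intros a b; lia |].
  intro k; rewrite HS; split.
  - intro; exists (Z.to_nat (hi - k)); lia.
  - intros [n <-]; lia.
Qed.

Lemma iso_onto_ordinal (S : Z -> Prop) (lo : Z) (n : nat) :
  (forall k, S k <-> lo <= k < lo + Z.of_nat n)%Z ->
  iso_onto (ordinal_le n) S (fun t => lo + Z.of_nat (proj1_sig t))%Z.
Proof.
  intros HS; split; [|split].
  - intros [a Ha] [b Hb] E; simpl in E.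
    assert (a = b) by lia; subst b.
    f_equal; apply Peano_dec.le_unique.
  - intros [a Ha] [b Hb]; unfold ordinal_le; simpl; lia.
  - intro k; rewrite HS; split.
    + intro Hk; assert (Hlt : Z.to_nat (k - lo) < n) by lia.
      exists (exist (fun m => m < n) _ Hlt); simpl; lia.
    + intros [[a Ha] <-]; simpl; lia.
Qed.

Definition Z_convex (S : Z -> Prop) : Prop :=
  forall a b k, S a -> S b -> (a <= k <= b)%Z -> S k.

Lemma Z_max_exists (S : Z -> Prop) (s hi : Z) :
  S s -> (forall k, S k -> k <= hi)%Z -> exists m, S m /\ forall k, S k -> (k <= m)%Z.
Proof.
  intros Hs Hhi; revert Hs.
  induction s as [s IH] using (well_founded_ind (Zwf_up_well_founded hi)); intro Hs.
  destruct (classic (exists k, S k /\ (s < k)%Z)) as [[k [Hk Hsk]] | Hnone].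
  - apply (IH k); auto; specialize (Hhi k Hk); unfold Zwf_up; lia.
  - exists s; split; auto.
    intros k Hk; apply Z.nlt_ge; intro; apply Hnone; eauto.
Qed.

Lemma Z_sup_cases (S : Z -> Prop) (s : Z) :
  S s ->
  (exists hi, S hi /\ forall k, S k -> (k <= hi)%Z) \/
  (forall k, exists b, S b /\ (k <= b)%Z).
Proof.
  intros Hs; destruct (classic (exists hi, forall k, S k -> (k <= hi)%Z)) as [[hi Hhi] | Hunb].
  - left; exact (Z_max_exists S s hi Hs Hhi).
  - right; intro k; apply NNPP; intro Hk.
    apply Hunb; exists k; intros b Hb.
    apply Z.nlt_ge; intro; apply Hk; exists b; split; [assumption | lia].
Qed.

Lemma Z_inf_cases (S : Z -> Prop) (s : Z) :
  S s ->
  (exists lo, S lo /\ forall k, S k -> (lo <= k)%Z) \/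
  (forall k, exists a, S a /\ (a <= k)%Z).
Proof.
  intros Hs.
  destruct (Z_sup_cases (fun k => S (- k)%Z) (- s)) as [[hi [Hhi Hmax]] | Hunb].
  - rewrite Z.opp_involutive; assumption.
  - left; exists (- hi)%Z; split; [assumption|].
    intros k Hk; specialize (Hmax (- k)%Z); rewrite Z.opp_involutive in Hmax.
    specialize (Hmax Hk); lia.
  - right; intro k; destruct (Hunb (- k)%Z) as [b [Hb Hkb]].
    exists (- b)%Z; split; [assumption | lia].
Qed.

Lemma Z_convex_cases (S : Z -> Prop) :
  Z_convex S ->
  (exists lo n, forall k, S k <-> (lo <= k < lo + Z.of_nat n)%Z) \/
  (exists lo, forall k, S k <-> (lo <= k)%Z) \/
  (exists hi, forall k, S k <-> (k <= hi)%Z) \/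
  (forall k, S k).
Proof.
  intros Hconv.
  destruct (classic (exists s, S s)) as [[s Hs] | Hempty].
  2: { left; exists 0%Z, 0; intro k; split; [intro Hk; exfalso; eauto | lia]. }
  destruct (Z_sup_cases S s Hs) as [[hi [Hhi Hmax]] | Hup],
           (Z_inf_cases S s Hs) as [[lo [Hlo Hmin]] | Hdown].
  - left; exists lo, (Z.to_nat (hi - lo + 1)); intro k.
    pose proof (Hmax s Hs); pose proof (Hmin s Hs); split.
    + intro Hk; pose proof (Hmax k Hk); pose proof (Hmin k Hk); lia.
    + intro; apply (Hconv lo hi); auto; lia.
  - right; right; left; exists hi; intro k; split; auto.
    intro; destruct (Hdown k) as [a [Ha ?]]; apply (Hconv a hi); auto.
  - right; left; exists lo; intro k; split; auto.
    intro; destruct (Hup k) as [b [Hb ?]]; apply (Hconv lo b); auto.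
  - right; right; right; intro k.
    destruct (Hdown k) as [a [Ha ?]], (Hup k) as [b [Hb ?]]; apply (Hconv a b); auto.
Qed.

Section Height.

Variable G : graph.
Hypothesis thin : forall (x y : vert G) (p q : path G x y), p = q.
Hypothesis total : forall x y : vert G, inhabited (path G x y) \/ inhabited (path G y x).
Variable x0 : vert G.

Local Open Scope Z_scope.

Lemma plen_loop (x : vert G) (p : path G x x) : plen p = 0%nat.
Proof. rewrite (thin x x p (pnil G x)); reflexivity. Qed.

Definition is_height (v : vert G) (k : Z) : Prop :=
  (exists p : path G x0 v, k = Z.of_nat (plen p)) \/
  (exists p : path G v x0, k = - Z.of_nat (plen p)).

Lemma is_height_unique (v : vert G) (k k' : Z) : is_height v k -> is_height v k' -> k = k'.
Proof.
  intros [[p ->] | [p ->]] [[q ->] | [q ->]].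
  - rewrite (thin _ _ p q); reflexivity.
  - pose proof (plen_loop _ (pcomp G _ _ _ p q)) as H; rewrite plen_pcomp in H; lia.
  - pose proof (plen_loop _ (pcomp G _ _ _ q p)) as H; rewrite plen_pcomp in H; lia.
  - rewrite (thin _ _ p q); reflexivity.
Qed.

Lemma is_height_exists (v : vert G) : exists k, is_height v k.
Proof.
  destruct (total x0 v) as [[p] | [p]].
  - exists (Z.of_nat (plen p)); left; exists p; reflexivity.
  - exists (- Z.of_nat (plen p)); right; exists p; reflexivity.
Qed.

Lemma is_height_pcomp (u v : vert G) (a : Z) (p : path G u v) :
  is_height u a -> is_height v (a + Z.of_nat (plen p)).
Proof.
  intros [[q ->] | [q ->]].
  - left; exists (pcomp G _ _ _ q p); rewrite plen_pcomp; lia.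
  - destruct (total x0 v) as [[r] | [r]].
    + left; exists r.
      pose proof (f_equal plen (thin _ _ (pcomp G _ _ _ q r) p)) as H.
      rewrite plen_pcomp in H; lia.
    + right; exists r.
      pose proof (f_equal plen (thin _ _ (pcomp G _ _ _ p r) q)) as H.
      rewrite plen_pcomp in H; lia.
Qed.

Definition height (v : vert G) : Z :=
  proj1_sig (constructive_indefinite_description _ (is_height_exists v)).

Lemma heightP (v : vert G) : is_height v (height v).
Proof. exact (proj2_sig (constructive_indefinite_description _ (is_height_exists v))). Qed.

Lemma height_path (u v : vert G) (p : path G u v) : height v = height u + Z.of_nat (plen p).
Proof.
  apply (is_height_unique v); [apply heightP | apply is_height_pcomp, heightP].
Qed.

Lemma height_inj (u v : vert G) : height u = height v -> u = v.
Proof.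
  intros E; destruct (total u v) as [[p] | [p]]; pose proof (height_path _ _ p).
  - apply (plen0_eq G _ _ p); lia.
  - symmetry; apply (plen0_eq G _ _ p); lia.
Qed.

Lemma height_le (u v : vert G) : inhabited (path G u v) <-> height u <= height v.
Proof.
  split.
  - intros [p]; rewrite (height_path _ _ p); lia.
  - intro Huv; destruct (total u v) as [Hp | [p]]; [assumption|].
    pose proof (height_path _ _ p).
    rewrite (height_inj u v) by lia; exact (inhabits (pnil G v)).
Qed.

Lemma height_image_convex : Z_convex (fun k => exists v, height v = k).
Proof.
  intros a b k [u <-] [v <-] Hk.
  assert (Huv : height u <= height v) by lia.
  destruct (proj2 (height_le u v) Huv) as [p]; clear Huv.
  revert k Hk; induction p as [x | e y p IH]; intros k Hk.
  - exists x; lia.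
  - pose proof (height_path _ _ (pcons G e _ (pnil G (cod G e)))) as Hstep; simpl in Hstep.
    destruct (Z.eq_dec k (height (dom G e))) as [-> | Hne].
    + exists (dom G e); reflexivity.
    + apply IH; lia.
Qed.

Lemma height_iso_onto :
  iso_onto (fun u v => inhabited (path G u v)) (fun k => exists v, height v = k) height.
Proof. split; [exact height_inj | split; [exact height_le | reflexivity]]. Qed.

End Height.

Lemma free_cat_embeds_in_Z (G : graph) :
  (forall (x y : vert G) (p q : path G x y), p = q) ->
  (forall x y : vert G, inhabited (path G x y) \/ inhabited (path G y x)) ->
  exists d : vert G -> Z,
    iso_onto (fun u v => inhabited (path G u v)) (fun k => exists v, d v = k) d /\
    Z_convex (fun k => exists v, d v = k).
Proof.
  intros thin total; destruct (classic (inhabited (vert G))) as [[x0] | Hempty].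
  - exists (height G total x0).
    split; [exact (height_iso_onto G thin total x0) | exact (height_image_convex G thin total x0)].
  - (* With no vertices the image is empty, an interval that yields the ordinal 0. *)
    exists (fun _ => 0%Z).
    assert (Hno : forall v : vert G, False) by (intro v; exact (Hempty (inhabits v))).
    split; [split; [|split] |]; [intro v | intro v | reflexivity | intros a b k [v _]];
      destruct (Hno v).
Qed.

Theorem mainTheorem6 (G : graph) :
  free_cat_is_total_order G ->
  (exists n : nat, free_cat_iso_poset G (ordinal n) (ordinal_le n)) \/
  free_cat_iso_poset G nat le \/
  free_cat_iso_poset G nat (fun a b => b <= a) \/
  free_cat_iso_poset G Z Z.le.
Proof.
  intros [[thin _] total].
  destruct (free_cat_embeds_in_Z G thin total) as [d [Hd Hconv]].
  destruct (Z_convex_cases _ Hconv) as [[lo [n HS]] | [[lo HS] | [[hi HS] | HS]]].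
  - left; exists n; exact (iso_onto_same_image _ _ _ _ _ Hd (iso_onto_ordinal _ lo n HS)).
  - right; left; exact (iso_onto_same_image _ _ _ _ _ Hd (iso_onto_nat _ lo HS)).
  - right; right; left; exact (iso_onto_same_image _ _ _ _ _ Hd (iso_onto_nat_op _ hi HS)).
  - right; right; right; exact (iso_onto_same_image _ _ _ _ _ Hd (iso_onto_Z _ HS)).
Qed.
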